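(* Consider Algorithm 1 (described in the context) applied to the multistage model, and suppose it does not stop at Step 1. Then for every iteration index $k\ge1$, the iterate $(\boldsymbol x^k,\eta^k,\boldsymbol y^k,u^k)$ is feasible for the multistage model, and $$z^{MS}_{T,R}(\boldsymbol x^*,\eta^*,\boldsymbol y^*,u^* )\le z^{MS}_{T,R}(\boldsymbol x^{k+1},\eta^{k+1},\boldsymbol y^{k+1},u^{k+1})\le z^{MS}_{T,R}(\boldsymbol x^{k},\eta^{k},\boldsymbol y^{k},u^{k}),$$ where $(\boldsymbol x^*,\eta^*,\boldsymbol y^*,u^* )$ is an optimal solution of the multistage model.
   Context: Setting. Integers $T\ge2$, $M,N\ge1$; costs $f_{ti}\ge0$ (vector $\boldsymbol f_t$), $c_{tij}\ge0$ (vector $\boldsymbol c_t\in\mathbb R^{MN}$), capacities $h_{ti}>0$; $(\boldsymbol A_t\boldsymbol y)_j=\sum_iy_{ij}$, $(\boldsymbol B_t\boldsymbol y)_i=\frac1{h_{ti}}\sum_jy_{ij}$. Ceilings and maxima of vectors are componentwise. Scenario tree: finite rooted tree, node set $\mathcal T$, root $1$, all root-to-leaf paths of $T$ nodes; $\mathcal T_t$ nodes at depth $t$, $t_n$ period of $n$, $\mathcal L=\mathcal T_T$, $a(n)$ parent, $\mathcal C(n)$ children, $\mathcal P(n)$ nodes on the root-to-$n$ path (inclusive); probabilities $p_n>0$, $\sum_{n\in\mathcal T_t}p_n=1$, $\sum_{m\in\mathcal C(n)}p_m=p_n$; demands $\boldsymbol d_n\in\mathbb R^N_{\ge0}$. Risk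 parameters $\lambda_t\in[0,1]$, $\alpha_t\in(0,1)$ ($t\ge2$); $\tilde{\boldsymbol f}_n=\boldsymbol f_{t_n}$ if $n=1$ else $(1-\lambda_{t_n})\boldsymbol f_{t_n}$; $\tilde{\boldsymbol c}_n=\boldsymbol c_{t_n}$ if $n=1$ else $(1-\lambda_{t_n})\boldsymbol c_{t_n}$; $\tilde\lambda_n=0$ if $n\in\mathcal L$ else $\lambda_{t_n+1}$; $\tilde\alpha_n=0$ if $n=1$ else $\lambda_{t_n}/(1-\alpha_{t_n})$. Multistage model: minimize $z^{MS}_{T,R}(\boldsymbol x,\eta,\boldsymbol y,u):=\sum_{n\in\mathcal T}p_n\big(\tilde{\boldsymbol f}_n^{\mathsf T}\sum_{m\in\mathcal P(n)}\boldsymbol x_m+\tilde{\boldsymbol c}_n^{\mathsf T}\boldsymbol y_n+\tilde\lambda_n\eta_n+\tilde\alpha_nu_n\big)$ over $\boldsymbol x_n\in\mathbb Z^M_+$, $\boldsymbol y_n\in\mathbb R^{MN}_+$ ($n\in\mathcal T$), $\eta_n\in\mathbb R$ ($n\notin\mathcal L$), $u_n\ge0$ ($n\ne1$), subject to $\boldsymbol A_{t_n}\boldsymbol y_n=\boldsymbol d_n$, $\boldsymbol B_{t_n}\boldsymbol y_n\le\sum_{m\in\mathcal P(n)}\boldsymbol x_m$ ($n\in\mathcal T$), $u_n+\eta_{a(n)}\ge\boldsymbol f_{t_n}^{\mathsf T}\sum_{m\in\mathcal P(n)}\boldsymbol x_m+\boldsymbol c_{t_n}^{\mathsf T}\boldsymbol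 y_n$ ($n\ne1$). Algorithm 1. Step 1: solve the LP relaxation (drop integrality of $\boldsymbol x$) of the multistage model, obtaining an optimal $(\boldsymbol x^{MSLP},\eta^{MSLP},\boldsymbol y^{MSLP},u^{MSLP})$; if all $\boldsymbol x^{MSLP}_n$ are integral, stop and return it. Step 2: set $k=0$ and $(\boldsymbol x^0,\eta^0,\boldsymbol y^0,u^0)=(\boldsymbol x^{MSLP},\eta^{MSLP},\boldsymbol y^{MSLP},u^{MSLP})$. Repeat until successive iterates differ by less than a tolerance $\epsilon$: (a) set $\boldsymbol x^{k+1}_1=\lceil\boldsymbol B_{t_1}\boldsymbol y^k_1\rceil$, $\boldsymbol x^{k+1}_n=\max_{m\in\mathcal P(n)}\lceil\boldsymbol B_{t_m}\boldsymbol y^k_m\rceil-\max_{m\in\mathcal P(a(n))}\lceil\boldsymbol B_{t_m}\boldsymbol y^k_m\rceil$ ($n\ne1$), $\eta^{k+1}_n=\max_{m\in\mathcal C(n)}\{\boldsymbol f_{t_m}^{\mathsf T}\sum_{l\in\mathcal P(m)}\boldsymbol x^{k+1}_l+\boldsymbol c_{t_m}^{\mathsf T}\boldsymbol y^k_m-u^k_m\}$ ($n\notin\mathcal L$) (this is an optimal solution of the multistage model in the variables $(\boldsymbol x,\eta)$ with $(\boldsymbol y,u)=(\boldsymbol y^k,u^k)$ fixed); (b) for each $n\ne1$ independently, let $(\boldsymbol y^{k+1}_n,u^{k+1}_n)$ be an optimal solution of $\min\tilde{\boldsymbol c}_n^{\mathsf T}\boldsymbol y_n+\tilde\alpha_nu_n$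 s.t. $\boldsymbol B_{t_n}\boldsymbol y_n\le\sum_{m\in\mathcal P(n)}\boldsymbol x^{k+1}_m$, $\boldsymbol A_{t_n}\boldsymbol y_n=\boldsymbol d_n$, $u_n-\boldsymbol c_{t_n}^{\mathsf T}\boldsymbol y_n\ge\boldsymbol f_{t_n}^{\mathsf T}\sum_{m\in\mathcal P(n)}\boldsymbol x^{k+1}_m-\eta^{k+1}_{a(n)}$, $\boldsymbol y_n\ge0$, $u_n\ge0$; for $n=1$ solve the same problem without $u_1$ and the last constraint; (c) $k\leftarrow k+1$. Return the final iterate, denoted $(\boldsymbol x^H,\eta^H,\boldsymbol y^H,u^H)$. *)

From HB Require Import structures.
From mathcomp Require Import all_boot all_order all_algebra.
From mathcomp Require Import reals.
Set Implicit Arguments. Unset Strict Implicit. Unset Printing Implicit Defensive.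
Import Order.TTheory GRing.Theory Num.Theory.
Local Open Scope ring_scope.

(* Nodes are the elements of a finite type V; facilities i : 'I_M,           *)
(* customers j : 'I_N; periods t are natural numbers 1..T.                   *)
Record data (R : realType) (V : finType) (M N : nat) := Data {
  T     : nat;
  root  : V;
  par   : V -> V;                       (* a(n), meaningful for n <> root *)
  per   : V -> nat;
  prob  : V -> R;
  dem   : V -> 'I_N -> R;
  fcost : nat -> 'I_M -> R;
  ccost : nat -> 'I_M -> 'I_N -> R;
  cap   : nat -> 'I_M -> R;
  lam   : nat -> R;
  alp   : nat -> R
}.

Section Model.
Variables (R : realType) (V : finType) (M N : nat) (D : data R V M N).

Local Notation T := (T D).
Local Notation root := (root D).
Local Notation par := (par D).
Local Notation per := (per D).

Definition children (n : V) : {set V} := [set m | (m != root) && (par m == n)].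

Definition path_nodes (n : V) : {set V} :=
  [set m | [exists k : 'I_(per n), iter k par n == m]].

Definition is_leaf (n : V) : bool := per n == T.

(* The scenario tree axioms: a finite rooted tree with root 1 (period 1), each
   non-root node one period after its parent, all nodes in periods 1..T and
   every node of period < T having a child (so all root-to-leaf paths have
   exactly T nodes); probabilities and demands as in the paper. *)
Definition scenario_tree : Prop :=
  [/\ per root = 1%N,
      (forall n, n != root -> per n = (per (par n)).+1),
      (forall n, (1 <= per n <= T)%N),
      (forall n, (per n < T)%N -> exists m, m \in children n) &
      (forall n, (per n = 1)%N -> n = root)].

Definition probabilities_ok : Prop :=
  [/\ (forall n, 0 < prob D n),
      (forall t, (1 <= t <= T)%N -> \sum_(n | per n == t) prob D n = 1) &
      (forall n, ~~ is_leaf n -> \sum_(m in children n) prob D m = prob D n)].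

Definition data_ok : Prop :=
  [/\ (2 <= T)%N, (1 <= M)%N, (1 <= N)%N, scenario_tree & probabilities_ok] /\
  [/\ (forall n j, 0 <= dem D n j),
      (forall t i, (1 <= t <= T)%N -> 0 <= fcost D t i),
      (forall t i j, (1 <= t <= T)%N -> 0 <= ccost D t i j),
      (forall t i, (1 <= t <= T)%N -> 0 < cap D t i) &
      (forall t, (2 <= t <= T)%N -> 0 <= lam D t <= 1 /\ 0 < alp D t < 1)].

Definition ftil (n : V) (i : 'I_M) : R :=
  if n == root then fcost D (per n) i else (1 - lam D (per n)) * fcost D (per n) i.
Definition ctil (n : V) (i : 'I_M) (j : 'I_N) : R :=
  if n == root then ccost D (per n) i j
  else (1 - lam D (per n)) * ccost D (per n) i j.
Definition lamtil (n : V) : R := if is_leaf n then 0 else lam D (per n).+1.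
Definition alptil (n : V) : R :=
  if n == root then 0 else lam D (per n) / (1 - alp D (per n)).

(* A candidate solution (x, eta, y, u).  eta_n is only meaningful for non-leaf
   n and u_n only for n <> root; the other components occur neither in the
   objective (their coefficients vanish) nor in the constraints. *)
Record sol := Sol {
  sx   : V -> 'I_M -> R;
  seta : V -> R;
  sy   : V -> 'I_M -> 'I_N -> R;
  su   : V -> R
}.

Definition Aop (y : 'I_M -> 'I_N -> R) (j : 'I_N) : R := \sum_i y i j.
Definition Bop (t : nat) (y : 'I_M -> 'I_N -> R) (i : 'I_M) : R :=
  (cap D t i)^-1 * \sum_j y i j.

Definition cumx (x : V -> 'I_M -> R) (n : V) (i : 'I_M) : R :=
  \sum_(m in path_nodes n) x m i.

Definition stage_cost (x : V -> 'I_M -> R) (y : V -> 'I_M -> 'I_N -> R) (n : V) : R :=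
  \sum_i fcost D (per n) i * cumx x n i + \sum_i \sum_j ccost D (per n) i j * y n i j.

Definition zMS (s : sol) : R :=
  \sum_n prob D n *
    ( \sum_i ftil n i * cumx (sx s) n i
    + \sum_i \sum_j ctil n i j * sy s n i j
    + lamtil n * seta s n + alptil n * su s n ).

Definition feasible_LP (s : sol) : Prop :=
  [/\ (forall n i, 0 <= sx s n i),
      (forall n i j, 0 <= sy s n i j),
      (forall n, n != root -> 0 <= su s n),
      (forall n j, Aop (sy s n) j = dem D n j) /\
      (forall n i, Bop (per n) (sy s n) i <= cumx (sx s) n i) &
      (forall n, n != root ->
         stage_cost (sx s) (sy s) n <= su s n + seta s (par n))].

Definition feasible_MS (s : sol) : Prop :=
  feasible_LP s /\ (forall n i, sx s n i \is a Num.int).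

Definition optimal_MS (s : sol) : Prop :=
  feasible_MS s /\ forall s', feasible_MS s' -> zMS s <= zMS s'.

Definition optimal_LP (s : sol) : Prop :=
  feasible_LP s /\ forall s', feasible_LP s' -> zMS s <= zMS s'.

Definition is_max_over (A : {set V}) (g : V -> R) (v : R) : Prop :=
  (exists2 m, m \in A & v = g m) /\ (forall m, m \in A -> g m <= v).

Definition ceilB (y : V -> 'I_M -> 'I_N -> R) (m : V) (i : 'I_M) : R :=
  (Num.ceil (Bop (per m) (y m) i))%:~R.

(* max_{m in P(n)} ceil(B_{t_m} y_m)_i  (P(n) contains n) *)
Definition pathmax (y : V -> 'I_M -> 'I_N -> R) (n : V) (i : 'I_M) : R :=
  \big[Num.max/ceilB y n i]_(m in path_nodes n) ceilB y m i.

(* Step 2(a): the rounding of x and the update of eta *)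
Definition step_x (y : V -> 'I_M -> 'I_N -> R) (n : V) (i : 'I_M) : R :=
  if n == root then ceilB y root i else pathmax y n i - pathmax y (par n) i.

Definition step_eta_ok (x : V -> 'I_M -> R) (s : sol) (eta : V -> R) : Prop :=
  forall n, ~~ is_leaf n ->
    is_max_over (children n) (fun m => stage_cost x (sy s) m - su s m) (eta n).

(* Step 2(b): the nodewise subproblems with (x, eta) fixed *)
Definition sub_feasible (x : V -> 'I_M -> R) (eta : V -> R) (n : V)
    (yn : 'I_M -> 'I_N -> R) (un : R) : Prop :=
  [/\ (forall i, Bop (per n) yn i <= cumx x n i),
      (forall j, Aop yn j = dem D n j),
      (forall i j, 0 <= yn i j) &
      (n != root ->
        0 <= un /\
        un - \sum_i \sum_j ccost D (per n) i j * yn i j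
          >= \sum_i fcost D (per n) i * cumx x n i - eta (par n))].

Definition sub_obj (n : V) (yn : 'I_M -> 'I_N -> R) (un : R) : R :=
  \sum_i \sum_j ctil n i j * yn i j + (if n == root then 0 else alptil n * un).

Definition sub_optimal (x : V -> 'I_M -> R) (eta : V -> R) (n : V)
    (yn : 'I_M -> 'I_N -> R) (un : R) : Prop :=
  sub_feasible x eta n yn un /\
  forall yn' un', sub_feasible x eta n yn' un' -> sub_obj n yn un <= sub_obj n yn' un'.

Definition alg_step (s s' : sol) : Prop :=
  [/\ (forall n i, sx s' n i = step_x (sy s) n i),
      step_eta_ok (sx s') s (seta s') &
      (forall n, sub_optimal (sx s') (seta s') n (sy s' n) (su s' n))].

End Model.

From Pilot Require Import Defs.
From HB Require Import structures.
From mathcomp Require Import all_boot all_order all_algebra.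
From mathcomp Require Import reals.
From mathcomp Require Import lra zify.
Set Implicit Arguments. Unset Strict Implicit. Unset Printing Implicit Defensive.
Import Order.TTheory GRing.Theory Num.Theory.
Local Open Scope ring_scope.

(* Write X_n for the cumulative capacity sum_{m in P(n)} x_m.  Step 2(a) makes
   X'_n = max_{m in P(n)} ceil(B y_m): an integral, path-monotone capacity
   covering the flows y, so every iterate is feasible.  If (x, eta, y, u) is
   itself feasible, X_n is also integral, monotone along paths and covers y,
   hence X'_n <= X_n; through the maximum defining eta' this gives
   eta' <= eta, and the old (y_n, u_n) stays feasible for the nodal
   subproblems of Step 2(b), whose optimal values can therefore only
   decrease.  Summed over the nodes, the objective decreases. *)

Lemma intr_ceil_le (R : archiRealDomainType) (a z : R) :
  z \is a Num.int -> a <= z -> (Num.ceil a)%:~R <= z.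
Proof. by case/intrP=> q -> le_az; rewrite ler_int ceil_le_int. Qed.

Section Model.
Variables (R : realType) (V : finType) (M N : nat) (D : data R V M N).
Hypothesis Htree : scenario_tree D.

Local Notation rt := (Defs.root D).
Local Notation par := (par D).
Local Notation per := (per D).
Local Notation path_nodes := (path_nodes D).

Lemma per_bounds n : (1 <= per n <= T D)%N.
Proof. by case: Htree. Qed.

Lemma per_root : per rt = 1%N.
Proof. by case: Htree. Qed.

Lemma per_par n : n != rt -> per n = (per (par n)).+1.
Proof. by case: Htree => _ H _ _ _; exact: H. Qed.

Lemma per_ge2 n : n != rt -> (2 <= per n)%N.
Proof. by move=> /per_par ->; have := per_bounds (par n); lia. Qed.

Lemma tree_ind (P : V -> Prop) :
  P rt -> (forall n, n != rt -> P (par n) -> P n) -> forall n, P n.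
Proof.
move=> Prt Ppar; suff Pper p n : per n = p -> P n by move=> n; exact: Pper.
elim: p n => [|p IHp] n pern; first by have := per_bounds n; rewrite pern.
have [-> //|nrt] := eqVneq n rt.
by apply: (Ppar n nrt); apply: IHp; have := per_par nrt; lia.
Qed.

Lemma path_nodes_root : path_nodes rt = [set rt].
Proof.
apply/setP => m; rewrite !inE; apply/existsP/eqP => [[[k]]|->] /=.
  by rewrite per_root; case: k => // _ /eqP.
have k0 : (0 < per rt)%N by rewrite per_root.
by exists (Ordinal k0).
Qed.

Lemma path_nodes_par n : n != rt -> path_nodes n = n |: path_nodes (par n).
Proof.
move=> nrt; have pern := per_par nrt.
apply/setP => m; rewrite !inE; apply/existsP/idP.
  case=> [[[|k] ltk]] /= /eqP <-; first by rewrite eqxx.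
  have ltk' : (k < per (par n))%N by rewrite -ltnS -pern.
  by apply/orP; right; apply/existsP; exists (Ordinal ltk'); rewrite -iterSr.
case/orP=> [/eqP ->|/existsP [[k ltk] /= /eqP <-]].
  have k0 : (0 < per n)%N by rewrite pern.
  by exists (Ordinal k0).
have ltk' : (k.+1 < per n)%N by rewrite pern.
by exists (Ordinal ltk'); rewrite -iterSr.
Qed.

Lemma path_nodes_self n : n \in path_nodes n.
Proof.
have [->|nrt] := eqVneq n rt; first by rewrite path_nodes_root set11.
by rewrite path_nodes_par // setU11.
Qed.

Lemma par_in_path_nodes n : n != rt -> par n \in path_nodes n.
Proof. by move=> nrt; rewrite path_nodes_par // in_setU1 path_nodes_self orbT. Qed.

Lemma per_path_nodes n m : m \in path_nodes n -> (per m <= per n)%N.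
Proof.
elim/tree_ind: n m => [|n nrt IHn] m; first by rewrite path_nodes_root inE => /eqP ->.
rewrite path_nodes_par // in_setU1 => /predU1P [-> //|/IHn].
by rewrite (per_par nrt); lia.
Qed.

Lemma notin_path_nodes_par n : n != rt -> n \notin path_nodes (par n).
Proof. by move=> nrt; apply/negP => /per_path_nodes; rewrite (per_par nrt); lia. Qed.

Lemma path_nodes_trans n m l :
  m \in path_nodes n -> l \in path_nodes m -> l \in path_nodes n.
Proof.
elim/tree_ind: n m => [|n nrt IHn] m; first by rewrite {1}path_nodes_root inE => /eqP ->.
rewrite [in X in X -> _]path_nodes_par // in_setU1 => /predU1P [-> //|mP lm].
by rewrite path_nodes_par // in_setU1 (IHn _ mP lm) orbT.
Qed.

Lemma par_in_children n : n != rt -> n \in children D (par n).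
Proof. by move=> nrt; rewrite inE nrt eqxx. Qed.

Lemma par_not_leaf n : n != rt -> ~~ is_leaf D (par n).
Proof.
by move=> nrt; rewrite /is_leaf; have := per_bounds n; rewrite per_par //; lia.
Qed.

Lemma cumx_root x i : cumx D x rt i = x rt i.
Proof. by rewrite /cumx path_nodes_root big_set1. Qed.

Lemma cumx_par x n i : n != rt -> cumx D x n i = x n i + cumx D x (par n) i.
Proof.
by move=> nrt; rewrite /cumx path_nodes_par // big_setU1 ?notin_path_nodes_par.
Qed.

Lemma cumx_le_path x n m i : (forall n i, 0 <= x n i) ->
  m \in path_nodes n -> cumx D x m i <= cumx D x n i.
Proof.
move=> x_ge0; elim/tree_ind: n m => [|n nrt IHn] m.
  by rewrite path_nodes_root inE => /eqP ->.
rewrite path_nodes_par // in_setU1 => /predU1P [-> //|/IHn le_mpar].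
by rewrite [cumx D x n i]cumx_par // (le_trans le_mpar) // lerDr.
Qed.

Lemma cumx_int x n i : (forall n i, x n i \is a Num.int) -> cumx D x n i \is a Num.int.
Proof. by move=> x_int; apply: rpred_sum => m _; exact: x_int. Qed.

Lemma ceilB_le_pathmax y n m i :
  m \in path_nodes n -> ceilB D y m i <= pathmax D y n i.
Proof. exact: le_bigmax_cond. Qed.

Lemma pathmax_root y i : pathmax D y rt i = ceilB D y rt i.
Proof. by rewrite /pathmax path_nodes_root bigmax_set1 maxxx. Qed.

Lemma pathmax_par_le y n i : n != rt -> pathmax D y (par n) i <= pathmax D y n i.
Proof.
move=> nrt; apply/bigmax_leP; split; first exact/ceilB_le_pathmax/par_in_path_nodes.
move=> m mP; apply/ceilB_le_pathmax.
exact: path_nodes_trans (par_in_path_nodes nrt) mP.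
Qed.

Lemma pathmax_int y n i : pathmax D y n i \is a Num.int.
Proof.
apply: (big_ind (fun v => v \is a Num.int)) => [|v w vZ wZ|m _]; rewrite ?intr_int //.
by rewrite maxEle; case: ifP.
Qed.

Lemma cumx_step_x y n i : cumx D (step_x D y) n i = pathmax D y n i.
Proof.
elim/tree_ind: n => [|n nrt IHn]; first by rewrite cumx_root /step_x eqxx pathmax_root.
by rewrite cumx_par // IHn /step_x (negbTE nrt) subrK.
Qed.

Lemma pathmax_le_cumx x y n i :
  (forall n i, 0 <= x n i) -> (forall n i, x n i \is a Num.int) ->
  (forall n i, Bop D (per n) (y n) i <= cumx D x n i) ->
  pathmax D y n i <= cumx D x n i.
Proof.
move=> x_ge0 x_int yB.
have ceilB_le m : m \in path_nodes n -> ceilB D y m i <= cumx D x n i.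
  move=> mP; apply: le_trans (cumx_le_path i x_ge0 mP).
  exact: intr_ceil_le (cumx_int m i x_int) (yB m i).
by apply/bigmax_leP; split=> [|m]; [exact/ceilB_le/path_nodes_self|exact: ceilB_le].
Qed.

Section Iteration.
Hypothesis HD : data_ok D.

Lemma prob_ge0 n : 0 <= prob D n.
Proof. by case: HD => [[_ _ _ _ [prob_gt0 _ _]] _]; exact/ltW/prob_gt0. Qed.

Lemma fcost_ge0 n i : 0 <= fcost D (per n) i.
Proof. by case: HD => _ [_ f_ge0 _ _ _]; exact/f_ge0/per_bounds. Qed.

Lemma Bop_ge0 n y i : (forall i j, 0 <= y i j) -> 0 <= Bop D (per n) y i.
Proof.
move=> y_ge0; rewrite /Bop mulr_ge0 ?sumr_ge0 // invr_ge0.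
by case: HD => _ [_ _ _ cap_gt0 _]; exact/ltW/cap_gt0/per_bounds.
Qed.

Lemma lam_bounds t : (2 <= t <= T D)%N -> 0 <= lam D t <= 1.
Proof. by case: HD => _ [_ _ _ _ lam_alp] /lam_alp []. Qed.

Lemma ftil_ge0 n i : 0 <= ftil D n i.
Proof.
rewrite /ftil; case: eqP => [_|/eqP nrt]; first exact: fcost_ge0.
have /andP[_ lam_le1] : 0 <= lam D (per n) <= 1.
  by apply: lam_bounds; rewrite per_ge2 //=; case/andP: (per_bounds n).
by rewrite mulr_ge0 ?fcost_ge0 // subr_ge0.
Qed.

Lemma lamtil_ge0 n : 0 <= lamtil D n.
Proof.
rewrite /lamtil; case: ifP => // /negbT; rewrite /is_leaf => nleaf.
have /andP[lam_ge0 _] // : 0 <= lam D (per n).+1 <= 1.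
by apply: lam_bounds; have := per_bounds n; move: nleaf => /eqP; lia.
Qed.

Definition xeta_obj (x : V -> 'I_M -> R) (eta : V -> R) n :=
  \sum_i ftil D n i * cumx D x n i + lamtil D n * eta n.

Lemma zMS_nodal s : zMS D s =
  \sum_n prob D n * (xeta_obj (sx s) (seta s) n + sub_obj D n (sy s n) (su s n)).
Proof.
apply: eq_bigr => n _; congr (_ * _); rewrite /xeta_obj /sub_obj /alptil.
by case: eqP => _; rewrite ?mul0r ?addr0; lra.
Qed.

Lemma stage_cost_le_cumx x x' y m : (forall i, cumx D x' m i <= cumx D x m i) ->
  stage_cost D x' y m <= stage_cost D x y m.
Proof.
move=> le_x'x; rewrite /stage_cost lerD2r; apply: ler_sum => i _.
by rewrite ler_wpM2l ?fcost_ge0.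
Qed.

Lemma alg_step_cumx s s' n i :
  alg_step D s s' -> cumx D (sx s') n i = pathmax D (sy s) n i.
Proof.
by case=> x'E _ _; rewrite -cumx_step_x; apply: eq_bigr => m _; exact: x'E.
Qed.

Lemma alg_step_feasible s s' :
  (forall n i j, 0 <= sy s n i j) -> alg_step D s s' -> feasible_MS D s'.
Proof.
move=> y_ge0 [x'E eta'E sub_opt]; split; last first.
  by move=> n i; rewrite x'E /step_x; case: ifP; rewrite ?rpredB ?pathmax_int ?intr_int.
have sub_feas n := (sub_opt n).1; split.
- move=> n i; rewrite x'E /step_x; case: ifP => [_|/negbT nrt].
    by rewrite ler0z ceil_ge0 (lt_le_trans _ (Bop_ge0 rt i (y_ge0 rt))) ?ltrN10.
  by rewrite subr_ge0 pathmax_par_le.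
- by move=> n; case: (sub_feas n).
- by move=> n nrt; case: (sub_feas n) => _ _ _ /(_ nrt) [].
- by split=> n; case: (sub_feas n).
- move=> n nrt; case: (sub_feas n) => _ _ _ /(_ nrt) [_].
  by rewrite /stage_cost; lra.
Qed.

Lemma alg_step_sub_feasible s s' n : feasible_LP D s -> alg_step D s s' ->
  sub_feasible D (sx s') (seta s') n (sy s n) (su s n).
Proof.
move=> [_ y_ge0 u_ge0 [yA _] _] step; have [_ eta'E _] := step.
split=> // [i|nrt].
  rewrite (alg_step_cumx n i step) (le_trans (ceil_ge _)) //.
  exact/ceilB_le_pathmax/path_nodes_self.
split; first exact: u_ge0.
have [_ eta'_max] := eta'E _ (par_not_leaf nrt).
by have := eta'_max _ (par_in_children nrt); rewrite /stage_cost; lra.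
Qed.

Lemma alg_step_cumx_le s s' n i : feasible_MS D s -> alg_step D s s' ->
  cumx D (sx s') n i <= cumx D (sx s) n i.
Proof.
move=> [[x_ge0 _ _ [_ yB] _] x_int] step.
by rewrite (alg_step_cumx n i step) pathmax_le_cumx.
Qed.

Lemma alg_step_eta_le s s' n : feasible_MS D s -> alg_step D s s' ->
  ~~ is_leaf D n -> seta s' n <= seta s n.
Proof.
move=> feas step nleaf; have [[_ _ _ _ cost_le] _] := feas.
have [_ eta'E _] := step; have [[m] /[!inE] /andP[mrt /eqP <-] -> _] := eta'E n nleaf.
have := stage_cost_le_cumx (sy s) (fun i => alg_step_cumx_le m i feas step).
by have := cost_le m mrt; lra.
Qed.

Lemma alg_step_zMS_le s s' :
  feasible_MS D s -> alg_step D s s' -> zMS D s' <= zMS D s.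
Proof.
move=> feas step; rewrite !zMS_nodal; apply: ler_sum => n _.
rewrite ler_wpM2l ?prob_ge0 //; apply: lerD; last first.
  have [_ _ sub_opt] := step.
  by apply: (sub_opt n).2; exact: alg_step_sub_feasible feas.1 step.
apply: lerD.
  by apply: ler_sum => i _; rewrite ler_wpM2l ?ftil_ge0 ?alg_step_cumx_le.
have [leaf|nleaf] := boolP (is_leaf D n); first by rewrite /lamtil leaf !mul0r.
by rewrite ler_wpM2l ?lamtil_ge0 ?alg_step_eta_le.
Qed.

End Iteration.
End Model.

Theorem proposition3 (R : realType) (V : finType) (M N : nat)
    (D : data R V M N) (HD : data_ok D)
    (xstar : sol R V M N) (Hstar : optimal_MS D xstar)
    (K : nat) (it : nat -> sol R V M N)
    (H0 : optimal_LP D (it 0%N))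
    (Hnostop : ~ (forall n i, sx (it 0%N) n i \is a Num.int))
    (Hstep : forall k, (k < K)%N -> alg_step D (it k) (it k.+1)) :
  forall k, (1 <= k)%N ->
    ((k <= K)%N -> feasible_MS D (it k)) /\
    ((k < K)%N -> zMS D xstar <= zMS D (it k.+1) /\ zMS D (it k.+1) <= zMS D (it k)).
Proof.
have Htree : scenario_tree D by case: HD => [[]].
have y_ge0 k : (k <= K)%N -> forall n i j, 0 <= sy (it k) n i j.
  case: k => [_|k ltkK n]; first by case: H0 => [[]].
  by have [_ _ sub_opt] := Hstep k ltkK; case: (sub_opt n).1.
have feas k : (1 <= k <= K)%N -> feasible_MS D (it k).
  case: k => // k /= ltkK.
  exact: alg_step_feasible (y_ge0 k (ltnW ltkK)) (Hstep k ltkK).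
move=> k k_ge1; split=> [leKk|ltkK]; first by apply: feas; rewrite k_ge1.
split; first by apply: Hstar.2; apply: feas; rewrite ltkK.
by apply: alg_step_zMS_le Htree HD _ _ (feas k _) (Hstep k ltkK); rewrite k_ge1 ltnW.
Qed.
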